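(* Let $J$ and $J'$ be intervals and let $s,s':J\to J'$ be two shrinkings. Then $s$ and $s'$ are homotopic relative to $\partial J$; that is, the category whose objects are intervals and whose morphisms are shrinkings modulo homotopy relative to $\partial J$ is a poset.
   Context: A digraph has a vertex set and arrows $E\subseteq V\times V$ containing the diagonal; digraph maps preserve arrows. An interval is a digraph $J$ with vertices $\{0,\dots,k\}$ whose non-degenerate arrows are, for each $0\le i<k$, exactly one of $i\to i+1$ or $i+1\to i$; $\partial J=\{0,k\}$. A shrinking is a digraph map between intervals that is surjective and monotone on vertices. Two digraph maps $\varphi,\psi:J\to J'$ with $\varphi|_{\partial J}=\psi|_{\partial J}$ are homotopic relative to $\partial J$ if there is a finite chain of digraph maps $\varphi=\varphi_0,\dots,\varphi_r=\psi$, all agreeing on $\partial J$, such that for each $t$ either $\varphi_t(x)\to\varphi_{t+1}(x)$ for all vertices $x$, or $\varphi_{t+1}(x)\to\varphi_t(x)$ for all $x$. *)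

From mathcomp Require Import all_boot.
From Stdlib Require Import Relations.Relation_Operators.
Set Implicit Arguments. Unset Strict Implicit. Unset Printing Implicit Defensive.

(* An interval J is encoded by d : seq bool of length k; its vertex set is
   {0,...,k} = 'I_(size d).+1.  For i < k, the unique non-degenerate arrow
   between i and i+1 is  i -> i+1  if nth false d i = true, and
   i+1 -> i  if nth false d i = false. *)
Definition ivert (d : seq bool) := 'I_(size d).+1.

Definition iarrow (d : seq bool) (x y : nat) : bool :=
  [|| x == y, (y == x.+1) && nth false d x | (x == y.+1) && ~~ nth false d y].

Definition idmap (d d' : seq bool) (f : ivert d -> ivert d') : Prop :=
  forall x y : ivert d, iarrow d x y -> iarrow d' (f x) (f y).

Definition shrinking (d d' : seq bool) (f : ivert d -> ivert d') : Prop :=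
  [/\ idmap f,
      (forall y : ivert d', exists x : ivert d, f x = y) &
      (forall x y : ivert d, x <= y -> f x <= f y)].

Definition bnd0 (d : seq bool) : ivert d := ord0.
Definition bndk (d : seq bool) : ivert d := ord_max.

Definition htop_step (d d' : seq bool) (f g : ivert d -> ivert d') : Prop :=
  [/\ idmap f, idmap g, f (bnd0 d) = g (bnd0 d), f (bndk d) = g (bndk d) &
      ((forall x, iarrow d' (f x) (g x)) \/ (forall x, iarrow d' (g x) (f x)))].

Definition homotopic_rel (d d' : seq bool) (f g : ivert d -> ivert d') : Prop :=
  clos_refl_trans (ivert d -> ivert d') (@htop_step d d') f g.

From mathcomp Require Import all_boot zify.
From Stdlib Require Import Relations.Relation_Operators FunctionalExtensionality.
Set Implicit Arguments. Unset Strict Implicit. Unset Printing Implicit Defensive.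

(* Read a shrinking as a monotone map of {0..k} onto {0..k'} whose values rise
   by at most one per step.  Given two shrinkings s, s' that agree below n and
   with s' n < s n, we have s' n = j and s n = j+1.  Raising s' to j+1 on the
   maximal block [n, t) where it equals j gives a shrinking that agrees with s
   up to n and differs from s' by one elementary homotopy (all its moved points
   travel along the same arrow between j and j+1).  Induction on the length of
   the common prefix concludes. *)

Lemma ivert_le d (x : ivert d) : x <= size d.
Proof. by rewrite -ltnS ltn_ord. Qed.

Lemma iarrow_refl d u : iarrow d u u.
Proof. by rewrite /iarrow eqxx. Qed.

Lemma iarrow_succr d j : iarrow d j j.+1 = nth false d j.
Proof. by rewrite /iarrow eqxx; case: (nth _ _ _) => /=; lia. Qed.

Lemma iarrow_succl d j : iarrow d j.+1 j = ~~ nth false d j.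
Proof. by rewrite /iarrow eqxx; case: (nth _ _ _) => /=; lia. Qed.

Lemma iarrow_near d u v : iarrow d u v -> u <= v.+1 /\ v <= u.+1.
Proof. by rewrite /iarrow => /or3P [/eqP->|/andP[/eqP-> _]|/andP[/eqP-> _]]; lia. Qed.

Definition oriented (b : bool) (e : seq bool) (u v : nat) : bool :=
  if b then iarrow e u v else iarrow e v u.

Lemma oriented_refl b e u : oriented b e u u.
Proof. by rewrite /oriented; case: b; apply: iarrow_refl. Qed.

Lemma oriented_succ b e j : oriented b e j j.+1 = (b == nth false e j).
Proof. by rewrite /oriented iarrow_succr iarrow_succl; case: b; case: nth. Qed.

Lemma oriented_near b e u v : oriented b e u v -> v <= u.+1.
Proof. by rewrite /oriented; case: b => /iarrow_near; lia. Qed.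

(* Arguments outside {0..k} are junk: [inord] sends them to 0. *)
Definition fnat d d' (F : ivert d -> ivert d') (i : nat) : nat := F (inord i).

Lemma fnatE d d' (F : ivert d -> ivert d') (x : ivert d) : fnat F x = F x.
Proof. by rewrite /fnat inord_val. Qed.

Lemma fnat_le d d' (F : ivert d -> ivert d') i : fnat F i <= size d'.
Proof. exact: ivert_le. Qed.

Lemma fnat_inj d d' (F G : ivert d -> ivert d') :
  (forall i, i <= size d -> fnat F i = fnat G i) -> F = G.
Proof.
move=> FG; apply: functional_extensionality => x; apply: ord_inj.
by rewrite /= -!fnatE FG ?ivert_le.
Qed.

Lemma idmapP d d' (F : ivert d -> ivert d') :
  idmap F <-> forall i, i < size d ->
                oriented (nth false d i) d' (fnat F i) (fnat F i.+1).
Proof.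
have inordE i : i <= size d -> nat_of_ord (inord i : ivert d) = i.
  by move=> ?; rewrite inordK.
split=> [FP i lt_id | FP x y].
  rewrite /oriented /fnat; case Ed: nth; apply: FP;
    by rewrite /iarrow !inordE ?Ed ?eqxx ?orbT //; lia.
rewrite /iarrow => /or3P [/eqP/val_inj->|/andP[/eqP Ey Ed]|/andP[/eqP Ex Ed]].
- exact: iarrow_refl.
- have := FP x; rewrite /oriented Ed -Ey !fnatE; apply.
  by have := ivert_le y; lia.
- have := FP y; rewrite /oriented (negbTE Ed) -Ex !fnatE; apply.
  by have := ivert_le x; lia.
Qed.

Section ShrinkingTheory.

Variables (d d' : seq bool) (s : ivert d -> ivert d').
Hypothesis s_shrinking : shrinking s.

Lemma shrinking_mono i j : i <= j -> j <= size d -> fnat s i <= fnat s j.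
Proof.
by case: s_shrinking => _ _ mono le_ij le_jd; apply: mono; rewrite !inordK; lia.
Qed.

Lemma shrinking_succ i : i < size d -> fnat s i.+1 <= (fnat s i).+1.
Proof.
by case: s_shrinking => /idmapP s_map _ _ lt_id; apply: oriented_near (s_map i lt_id).
Qed.

Lemma shrinking_0 : fnat s 0 = 0.
Proof.
case: s_shrinking => _ /(_ ord0) [x sx] _.
by have := shrinking_mono (leq0n x) (ivert_le x); rewrite fnatE sx /=; lia.
Qed.

Lemma shrinking_last : fnat s (size d) = size d'.
Proof.
case: s_shrinking => _ /(_ ord_max) [x sx] _.
have := shrinking_mono (ivert_le x) (leqnn _); rewrite fnatE sx /=.
by have := fnat_le s (size d); lia.
Qed.

End ShrinkingTheory.

Lemma htop_step_sym d d' (f g : ivert d -> ivert d') :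
  htop_step f g -> htop_step g f.
Proof. by case=> ? ? ? ? fg; split=> //; case: fg; [right|left]. Qed.

Lemma homotopic_rel_sym d d' (f g : ivert d -> ivert d') :
  homotopic_rel f g -> homotopic_rel g f.
Proof.
elim=> [x y /htop_step_sym|x|x y z _ yx _ zy]; first exact: rt_step.
- exact: rt_refl.
- exact: rt_trans zy yx.
Qed.

Section Bump.

Variables (d d' : seq bool) (f : ivert d -> ivert d') (a b j : nat).
Hypotheses (f_shrinking : shrinking f) (a_gt0 : 0 < a) (a_le_b : a <= b)
           (b_le : b <= size d).
Hypotheses (f_block : forall i, a.-1 <= i < b -> fnat f i = j)
           (f_b : fnat f b = j.+1)
           (bump_oriented : nth false d a.-1 = nth false d' j).

Definition bump_nat (i : nat) : nat := if a <= i < b then j.+1 else fnat f i.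

Definition bump (x : ivert d) : ivert d' := inord (bump_nat x).

Lemma fnat_bump i : i <= size d -> fnat bump i = bump_nat i.
Proof.
have bump_le : bump_nat i <= size d'.
  by rewrite /bump_nat -f_b; case: ifP => _; apply: fnat_le.
by move=> le_id; rewrite /fnat /bump !inordK.
Qed.

Lemma bump_idmap : idmap bump.
Proof.
case: f_shrinking => /idmapP f_map _ _.
apply/idmapP => i lt_id; rewrite !fnat_bump //; try lia.
rewrite /bump_nat; case: ifP => in_i; case: ifP => in_Si.
- exact: oriented_refl.
- have -> : i.+1 = b by lia.
  by rewrite f_b oriented_refl.
- have ia : i = a.-1 by lia.
  by rewrite f_block ?oriented_succ ia ?bump_oriented //; lia.
- exact: f_map.
Qed.

Lemma bump_shrinking : shrinking bump.
Proof.
case: f_shrinking => _ f_onto _; split; first exact: bump_idmap.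
- move=> y; have [x <-] := f_onto y.
  case in_x: (a <= x < b).
    exists (inord a.-1); apply: ord_inj; rewrite -!fnatE fnat_bump; last first.
      by rewrite inordK; lia.
    rewrite inordK ?ltnS /bump_nat; last lia.
    by rewrite ifF ?f_block //; lia.
  by exists x; apply: ord_inj; rewrite -!fnatE fnat_bump ?ivert_le // /bump_nat in_x.
- move=> x y le_xy; have le_yd := ivert_le y.
  rewrite -!fnatE !fnat_bump ?ivert_le // /bump_nat.
  have := shrinking_mono f_shrinking le_xy le_yd.
  have below : x < a -> fnat f x <= j.
    move=> lt_xa; rewrite -(f_block (i := a.-1)); last lia.
    by apply: (shrinking_mono f_shrinking); lia.
  have above : b <= y -> j.+1 <= fnat f y.
    by move=> le_by; rewrite -f_b; apply: (shrinking_mono f_shrinking).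
  by case: ifP; case: ifP; lia.
Qed.

Lemma bump_step : htop_step f bump.
Proof.
case: f_shrinking => f_map _ _.
have fixed i : i <= size d -> ~~ (a <= i < b) -> fnat bump i = fnat f i.
  by move=> le_id out_i; rewrite fnat_bump // /bump_nat (negbTE out_i).
split=> //; first exact: bump_idmap.
- by apply: ord_inj; rewrite -!fnatE fixed //=; lia.
- by apply: ord_inj; rewrite -!fnatE fixed //=; lia.
- have moved (x : ivert d) : fnat bump x = fnat f x \/ fnat f x = j /\ fnat bump x = j.+1.
    rewrite fnat_bump ?ivert_le // /bump_nat.
    by case: ifP => in_x; [right; rewrite f_block //; lia | left].
  case Ej: (nth false d' j); [left|right] => x; rewrite -!fnatE;
    case: (moved x) => [->|[-> ->]];
    by rewrite ?iarrow_refl ?iarrow_succr ?iarrow_succl ?Ej.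
Qed.

End Bump.

Lemma shrinking_push d d' n (s s' : ivert d -> ivert d') :
  shrinking s -> shrinking s' -> n <= size d ->
  (forall i, i < n -> fnat s i = fnat s' i) -> fnat s' n < fnat s n ->
  exists s2, [/\ shrinking s2, htop_step s' s2 &
                 forall i, i <= n -> fnat s i = fnat s2 i].
Proof.
move=> s_sh s'_sh le_nd agree lt_n; set j := fnat s' n in lt_n.
have n_gt0 : 0 < n.
  by case: posnP lt_n => // ->; rewrite shrinking_0 // shrinking_0.
have agree_prev : fnat s n.-1 = fnat s' n.-1 by apply: agree; lia.
have s_succ : fnat s n <= (fnat s n.-1).+1.
  by have := shrinking_succ s_sh (i := n.-1); rewrite prednK //; apply.
have s'_prev : fnat s' n.-1 = j.
  by have := shrinking_mono s'_sh (leq_pred n) le_nd; rewrite -/j; lia.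
have s_n : fnat s n = j.+1 by lia.
have orient : nth false d n.-1 = nth false d' j.
  case: s_sh => /idmapP s_map _ _; have := s_map n.-1.
  by rewrite prednK // agree_prev s'_prev s_n oriented_succ => /(_ le_nd)/eqP.
have j_lt : j < fnat s' (size d).
  by rewrite shrinking_last //; have := fnat_le s n; lia.
have ex_t : exists t, (n <= t) && (j < fnat s' t) by exists (size d); rewrite le_nd.
case: (ex_minnP ex_t) => t /andP[le_nt lt_jt] t_min.
have le_td : t <= size d by apply: t_min; rewrite le_nd.
have block i : n.-1 <= i < t -> fnat s' i = j.
  move=> /andP[le_i lt_it]; case: (ltnP i n) => [lt_in|le_ni].
    by have -> : i = n.-1 by lia.
  have := shrinking_mono s'_sh le_ni (ltnW (leq_trans lt_it le_td)).
  have : ~~ (j < fnat s' i).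
    by apply/negP => lt_ji; have := t_min i; rewrite le_ni lt_ji; lia.
  by rewrite -/j; lia.
have lt_nt : n < t by case: (ltngtP n t) le_nt lt_jt => // <-; rewrite -/j ltnn.
have s'_t : fnat s' t = j.+1.
  have := shrinking_succ s'_sh (i := t.-1); rewrite prednK; last lia.
  by rewrite (block t.-1); [move/(_ le_td); lia | lia].
exists (bump s' n t j); split.
- exact: bump_shrinking.
- exact: bump_step.
- move=> i le_in; rewrite fnat_bump //; last lia.
  rewrite /bump_nat; case: ifP => in_i.
    by have -> : i = n by lia.
  by rewrite agree //; lia.
Qed.

Lemma homotopic_rel_common_prefix d d' k (s s' : ivert d -> ivert d') :
  shrinking s -> shrinking s' ->
  (forall i, i < (size d).+1 - k -> fnat s i = fnat s' i) -> homotopic_rel s s'.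
Proof.
elim: k s s' => [|k IH] s s' s_sh s'_sh agree.
  by rewrite (@fnat_inj _ _ s s') => [|i le_id]; [apply: rt_refl | apply: agree; lia].
set n := (size d).+1 - k.+1 in agree.
have le_nd : n <= size d by lia.
have IHn (u v : ivert d -> ivert d') : shrinking u -> shrinking v ->
    (forall i, i <= n -> fnat u i = fnat v i) -> homotopic_rel u v.
  by move=> u_sh v_sh uv; apply: IH => // i lt_i; apply: uv; lia.
wlog lt_n : s s' s_sh s'_sh agree / fnat s' n < fnat s n.
  move=> wlog_lt; case: (ltngtP (fnat s' n) (fnat s n)) => [|lt_n|eq_n].
  - exact: wlog_lt.
  - by apply/homotopic_rel_sym/wlog_lt => // i lt_in; rewrite agree.
  - apply: IHn => // i le_in.
    by case: (ltngtP i n) le_in => [lt_in _|//|->]; [apply: agree|].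
have [s2 [s2_sh step2 agree2]] := shrinking_push s_sh s'_sh le_nd agree lt_n.
apply: rt_trans (IHn _ _ s_sh s2_sh agree2) _.
exact/rt_step/htop_step_sym.
Qed.

Theorem mainTheorem7 (d d' : seq bool) (s s' : ivert d -> ivert d') :
  shrinking s -> shrinking s' -> homotopic_rel s s'.
Proof.
move=> s_sh s'_sh; apply: (homotopic_rel_common_prefix (k := (size d).+1)) => //.
by move=> i; rewrite subnn.
Qed.
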